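(* Let $F$ be a positive integer. The directed graph $\mathrm{G}^K(\mathcal{I}(F))$ is a tree with root $\hat x\in\{0,1\}^F$, the vector whose first $\lceil\frac{F+1}{2}\rceil-1$ entries are $1$, next $F-\lceil\frac{F+1}{2}\rceil$ entries are $0$, and last entry is $1$. Moreover, if $x=\mathcal{K}(S,F+1)$ for some $S\in\mathcal{I}(F)$, then the children of $x$ in $\mathrm{G}^K(\mathcal{I}(F))$ are exactly the vectors $x+\mathrm{e}_n-\mathrm{e}_{F-n}$ where $n\in\{1,\dots,F\}$ ranges over the indices satisfying: (1) $x_n=0$; (2) $x_k+x_j\ge 1$ for all positive integers $k,j$ with $k+j=n$; (3) $\frac F2<n<F$; (4) $x_{2n-F}=1$; (5) $3n\neq 2F$; (6) $4n\neq 3F$; (7) $n>F-m_x$, where $m_x=\min\{j: x_j=0\}$ if some $x_j=0$ and $m_x=F+1$ otherwise.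
   Context: A numerical semigroup is a subset $S\subseteq\mathbb{N}$ closed under addition, containing $0$, with $\mathbb{N}\setminus S$ finite; its Frobenius number is the largest integer not in $S$; its multiplicity $\mathrm{m}(S)$ is its smallest positive element. A numerical semigroup is irreducible if it cannot be written as the intersection of two numerical semigroups properly containing it; $\mathcal{I}(F)$ is the set of irreducible numerical semigroups with Frobenius number $F$. For $n\in S\setminus\{0\}$ and $i=1,\dots,n-1$, let $w_i$ be the least element of $S$ congruent to $i$ modulo $n$; the Kunz-coordinates vector of $S$ with respect to $n$ is $\mathcal{K}(S,n)=(x_1,\dots,x_{n-1})$ with $x_i=\frac{w_i-i}{n}$. For $S$ with Frobenius number $F$, $\mathcal{K}(S,F+1)\in\{0,1\}^F$ and $x_i=1$ iff $i\notin S$. $\mathrm{e}_i\in\mathbb{Z}^F$ is the $i$th unit vector. The directed graph $\mathrm{G}^K(\mathcal{I}(F))$ has vertex set $\{\mathcal{K}(S,F+1): S\in\mathcal{I}(F)\}$, and $(x,y)$ is an edge iff $m=\min\{i: x_i=0\}$ exists, $m<\frac F2$, and $y=x+\mathrm{e}_m-\mathrm{e}_{F-m}$. A directed graph is a tree with root $r$ if for every vertex $v\ne r$ there is a unique path of distinct edges from $v$ to $r$; if $(v,w)$ is an edge, $v$ is a child of $w$. *)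

From mathcomp Require Import all_boot all_order all_algebra.
Unset Printing Implicit Defensive.
Import GRing.Theory Num.Theory.

Definition numerical_semigroup (S : nat -> bool) : Prop :=
  S 0 /\ (forall a b, S a -> S b -> S (a + b)) /\
  (exists s : seq nat, forall n, ~~ S n -> n \in s).

Definition frobenius (S : nat -> bool) (F : nat) : Prop :=
  ~~ S F /\ forall n, F < n -> S n.

Definition proper_superset (S T : nat -> bool) : Prop :=
  (forall n, S n -> T n) /\ exists n, T n && ~~ S n.

Definition irreducible_ns (S : nat -> bool) : Prop :=
  numerical_semigroup S /\
  ~ exists T1 T2 : nat -> bool,
      [/\ numerical_semigroup T1, numerical_semigroup T2,
          proper_superset S T1, proper_superset S T2 &
          forall n, S n = T1 n && T2 n].

Definition in_IF (F : nat) (S : nat -> bool) : Prop :=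
  irreducible_ns S /\ frobenius S F.

(* Kunz coordinate: the least element w_i of S congruent to i modulo n
   (for 0 < i < n) is i + k * n, i.e. x_i = (w_i - i)/n = k. *)
Definition kunz_coord (S : nat -> bool) (n i k : nat) : Prop :=
  S (i + k * n) /\ forall k', k' < k -> ~~ S (i + k' * n).

(* Vectors of Z^F; the ordinal k : 'I_F stands for coordinate k+1. *)
Definition vec (F : nat) := {ffun 'I_F -> int}.

(* 1-based coordinate access (0 outside 1..F). *)
Definition kcoord (F : nat) (x : vec F) (j : nat) : int :=
  if 0 < j then (match insub j.-1 with Some i => x i | None => 0%R end) else 0%R.

Definition kunz_vec (S : nat -> bool) (F : nat) (x : vec F) : Prop :=
  forall i : 'I_F, exists k : nat, x i = Posz k /\ kunz_coord S F.+1 i.+1 k.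

Definition unitv (F m : nat) : vec F := [ffun k : 'I_F => Posz (k.+1 == m)].

Definition shiftv (F : nat) (x : vec F) (m : nat) : vec F :=
  [ffun k : 'I_F => (x k + unitv F m k - unitv F (F - m) k)%R].

Definition GK_vertex (F : nat) (x : vec F) : Prop :=
  exists S, in_IF F S /\ kunz_vec S F x.

Definition GK_edge (F : nat) (x y : vec F) : Prop :=
  GK_vertex F x /\ GK_vertex F y /\
  exists m, [/\ 1 <= m <= F, kcoord F x m = 0%R,
             (forall i, 1 <= i < m -> kcoord F x i <> 0%R),
             m.*2 < F & y = shiftv F x m].

(* walk v = v0 -> v1 -> ... -> vk = r, with p = [:: v1; ...; vk] *)
Fixpoint walk (T : Type) (E : T -> T -> Prop) (v : T) (p : seq T) (r : T) : Prop :=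
  match p with
  | [::] => v = r
  | w :: p' => E v w /\ walk T E w p' r
  end.

(* path of distinct edges *)
Definition edge_path (T : eqType) (E : T -> T -> Prop) (v : T) (p : seq T) (r : T) : Prop :=
  walk T E v p r /\ uniq (zip (v :: p) p).

Definition is_tree (T : eqType) (V : T -> Prop) (E : T -> T -> Prop) (r : T) : Prop :=
  V r /\ forall v, V v -> v <> r -> exists! p : seq T, edge_path T E v p r.

Definition ceil_half (n : nat) : nat := n.+1./2.

Definition xhat (F : nat) : vec F :=
  [ffun k : 'I_F => Posz ((k.+1 <= ceil_half F.+1 - 1) || (k.+1 == F))].

Definition mx (F : nat) (x : vec F) : nat :=
  head F.+1 [seq j <- iota 1 F | kcoord F x j == 0%R].

(* First, an irreducible numerical
   semigroup with Frobenius number F is characterised as one in which every gap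
   i with 2i <> F has F - i in S (maximal-counterexample argument one way,
   "every proper oversemigroup contains F" the other way).  Translated to
   K(S, F+1), this identifies the vertices with the vectors [kunz_irr]: 0/1
   vectors with x_F = 1, additively closed zero set, and no pair i, F - i of
   ones with 2i <> F.  An edge out of x moves at a = m_x, swapping the values at
   a and F - a; such a swap preserves [kunz_irr] as soon as the new zero set is
   closed, which we check both for the move at m_x (giving the parent) and for
   an index n satisfying (1)-(7) (giving a child).  Along edges m_x strictly
   increases and out-edges are unique, while a vertex with no out-edge is x^;
   hence every vertex has exactly one walk to x^, and its edges are distinct. *)

From mathcomp Require Import all_boot all_order all_algebra.
From mathcomp Require Import zify.
Import GRing.Theory Num.Theory.

Lemma kcoordE F (x : vec F) (i : 'I_F) : kcoord F x i.+1 = x i.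
Proof.
rewrite /kcoord /=; case: insubP => [j _ Hj|]; last by rewrite /= ltn_ord.
by congr (x _); apply: val_inj; rewrite Hj.
Qed.

Lemma kcoord_out F (x : vec F) j : (j == 0) || (F < j) -> kcoord F x j = 0%R.
Proof.
case/orP=> [/eqP->//|Hj]; rewrite /kcoord; case: ifP => // _.
by case: insubP => // k _ Hk; move: (ltn_ord k); rewrite Hk; lia.
Qed.

Lemma ord_of F j : 0 < j <= F -> exists i : 'I_F, j = i.+1.
Proof.
move=> Hj; have Hj' : j.-1 < F by lia.
by exists (Ordinal Hj') => /=; lia.
Qed.

Lemma vec_ext F (x y : vec F) :
  (forall j, 0 < j <= F -> kcoord F x j = kcoord F y j) -> x = y.
Proof.
by move=> H; apply/ffunP => i; rewrite -!kcoordE; apply: H; rewrite ltn_ord.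
Qed.

Lemma shiftvK F (x : vec F) a : a <= F -> shiftv F (shiftv F x a) (F - a) = x.
Proof. by move=> Ha; apply/ffunP => k; rewrite !ffunE subKn // subrK addrK. Qed.

Lemma shift_swapE F (x : vec F) a b j : a + b = F -> a != b ->
  kcoord F x a = 0%R -> kcoord F x b = 1%R -> 0 < j <= F ->
  kcoord F (shiftv F x a) j =
    if j == a then 1%R else if j == b then 0%R else kcoord F x j.
Proof.
move=> Hab Hne Hxa Hxb /ord_of [i Ej]; rewrite Ej kcoordE /shiftv /unitv !ffunE.
have -> : F - a = b by lia.
rewrite -Ej -kcoordE -Ej; case: (eqVneq j a) => [Eja|_].
  by rewrite Eja (negbTE Hne) Hxa.
by case: (eqVneq j b) => [->|_]; rewrite ?Hxb ?subrr ?addr0 ?subr0.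
Qed.

Lemma head_filter_iota (p : pred nat) a n :
  let h := head (a + n) [seq j <- iota a n | p j] in
  [/\ a <= h <= a + n, (h < a + n -> p h) & forall i, a <= i < h -> ~~ p i].
Proof.
elim: n a => [|n IH] a /=; first by rewrite addn0 leqnn ltnn; split => // i; lia.
case: (boolP (p a)) => pa /=; first by split => [||i]; lia.
have [H1 H2 H3] := IH a.+1; rewrite addSnnS in H1 H2 H3; split => //; first lia.
by move=> i Hi; case: (eqVneq i a) => [->//|Hne]; apply: H3; lia.
Qed.

Lemma mx_spec F (x : vec F) :
  [/\ 0 < mx F x <= F.+1, (mx F x <= F -> kcoord F x (mx F x) = 0%R)
    & forall i, 0 < i < mx F x -> kcoord F x i <> 0%R].
Proof.
have := head_filter_iota (fun j => kcoord F x j == 0%R) 1 F.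
rewrite add1n /= -/(mx F x) => -[H1 H2 H3]; split => //.
  by move=> H; apply/eqP; apply: H2; lia.
by move=> i Hi /eqP; apply/negP; apply: H3.
Qed.

Lemma mx_le {F} {x : vec F} {p} : 0 < p -> kcoord F x p = 0%R -> mx F x <= p.
Proof.
by move=> Hp Hxp; have [_ _ Hmin] := mx_spec F x; case: leqP (Hmin p) => //; lia.
Qed.

Lemma mx_eq {F} {x : vec F} {m} : 0 < m <= F -> kcoord F x m = 0%R ->
  (forall i, 0 < i < m -> kcoord F x i <> 0%R) -> mx F x = m.
Proof.
move=> Hm Hxm Hmin; have [H1 H2 _] := mx_spec F x.
have Hle : mx F x <= m by apply: mx_le => //; lia.
apply/eqP; rewrite eqn_leq Hle /=; case: (leqP m (mx F x)) => // Hlt.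
by exfalso; apply: (Hmin (mx F x)); [lia | apply: H2; lia].
Qed.

Lemma mx_gt {F} {x : vec F} {m} : m <= F ->
  (forall i, 0 < i <= m -> kcoord F x i <> 0%R) -> m < mx F x.
Proof.
move=> Hm Hi; have [H1 H2 _] := mx_spec F x.
by case: ltnP => // Hle; exfalso; apply: (Hi (mx F x)); [lia | apply: H2; lia].
Qed.

Lemma mx_below_half {F} {x : vec F} : (mx F x).*2 < F ->
  [/\ 0 < mx F x < F, (mx F x).*2 != F & kcoord F x (mx F x) = 0%R].
Proof.
by move=> Hm2; have [Hm Hxm _] := mx_spec F x; split; [lia | lia | apply: Hxm; lia].
Qed.

Lemma frobenius_pos {S : nat -> bool} {F} :
  numerical_semigroup S -> frobenius S F -> 0 < F.
Proof. by move=> [S0 _] [NF _]; case: F NF => //; rewrite S0. Qed.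

Lemma adjoin_ns (S : nat -> bool) h :
  numerical_semigroup S -> S (h + h) -> (forall b, S b -> 0 < b -> S (h + b)) ->
  numerical_semigroup (fun n => S n || (n == h)).
Proof.
move=> [S0 [Sadd [s Hs]]] Shh Shb; split; first by rewrite S0.
split; last by exists s => n; rewrite negb_or => /andP[/Hs].
move=> a b /orP[Sa|/eqP->] /orP[Sb|/eqP->].
- by rewrite Sadd.
- case: (posnP a) => [->|a0]; first by rewrite add0n eqxx orbT.
  by rewrite addnC Shb.
- case: (posnP b) => [->|b0]; first by rewrite addn0 eqxx orbT.
  by rewrite Shb.
- by rewrite Shh.
Qed.

(* An irreducible S has no such gap h besides its Frobenius number F:
   otherwise S is the intersection of S u {h} and S u {F}. *)
Lemma irreducible_no_special_gap {S : nat -> bool} {F h} :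
  irreducible_ns S -> frobenius S F -> ~~ S h -> h != F ->
  S (h + h) -> (forall b, S b -> 0 < b -> S (h + b)) -> False.
Proof.
move=> [NS Hirr] [NF Hfr] Sh hF Shh Shb.
have F0 := frobenius_pos NS (conj NF Hfr).
apply: Hirr; exists (fun n => S n || (n == h)), (fun n => S n || (n == F)).
split; first exact: adjoin_ns.
- by apply: adjoin_ns => // [|b _ b0]; apply: Hfr; lia.
- by split=> [n ->//|]; exists h; rewrite eqxx orbT Sh.
- by split=> [n ->//|]; exists F; rewrite eqxx orbT NF.
- move=> n; case: (S n) => //=; case: eqP => [->|_] //.
  by rewrite (negbTE hF).
Qed.

(* Symmetry of an irreducible semigroup: take a counterexample h maximal; then
   2h > F and h + b is in S for every nonzero b in S, which is excluded. *)
Lemma irreducible_symmetric {S : nat -> bool} {F} :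
  irreducible_ns S -> frobenius S F ->
  forall i, 0 < i < F -> i.*2 != F -> ~~ S i -> S (F - i).
Proof.
move=> Irr Fr i Hi Hi2 Si; apply/negPn/negP => Sfi.
have [[S0 [Sadd _]] _] := Irr; have [_ Hfr] := Fr.
pose Q h := [&& 0 < h, h < F, ~~ S h, ~~ S (F - h) & h.*2 != F].
have exQ : exists h, Q h by exists i; rewrite /Q Si Sfi Hi2; lia.
have ubQ : forall h, Q h -> h <= F by move=> h /and5P[]; lia.
case: (ex_maxnP exQ ubQ) => h /and5P [h0 hF Sh Sfh h2] Hmax.
have Fh2 : F < h.*2.
  case: (ltngtP h.*2 F) => // [Hlt|Heq]; last by rewrite Heq eqxx in h2.
  suff /Hmax : Q (F - h) by lia.
  by rewrite /Q Sfh subKn ?Sh; lia.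
apply: (irreducible_no_special_gap Irr Fr Sh) => [||b Sb b0]; first (apply/eqP; lia).
  by apply: Hfr; lia.
apply/negPn/negP => Shb.
case: (ltnP F (h + b)) => [/Hfr|HhbF]; first by rewrite (negbTE Shb).
case: (eqVneq (h + b) F) => [Ehb|Hhb].
  by move: Sfh; rewrite (_ : F - h = b) ?Sb //; lia.
have Sfhb : ~~ S (F - (h + b)).
  apply/negP => /(Sadd _ _)/(_ Sb); rewrite (_ : F - (h + b) + b = F - h); last lia.
  by rewrite (negbTE Sfh).
suff /Hmax : Q (h + b) by lia.
by rewrite /Q Shb Sfhb; lia.
Qed.

(* Conversely a symmetric semigroup is irreducible: any numerical semigroup
   properly containing S contains F, so S is no intersection of two of them. *)
Lemma symmetric_irreducible (S : nat -> bool) F :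
  numerical_semigroup S -> frobenius S F ->
  (forall i, 0 < i < F -> i.*2 != F -> ~~ S i -> S (F - i)) -> irreducible_ns S.
Proof.
move=> NS [NF Hfr] Hsym; split => // -[T1 [T2 [NT1 NT2 [sub1 ex1] [sub2 ex2] Heq]]].
have [S0 _] := NS.
have contains_F : forall T, numerical_semigroup T -> (forall n, S n -> T n) ->
    (exists n, T n && ~~ S n) -> T F.
  move=> T [_ [Tadd _]] sub [n /andP[Tn Sn]].
  have n0 : 0 < n by case: n Sn Tn => //; rewrite S0.
  have nF : n <= F by case: leqP Sn => // /Hfr ->.
  case: (eqVneq n F) => [<-//|nF'].
  case: (eqVneq n.*2 F) => [<-|n2]; first by rewrite -addnn Tadd.
  have /sub/(Tadd _ _ Tn) : S (F - n) by apply: Hsym; lia.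
  by rewrite subnKC.
by move: (Heq F); rewrite (negbTE NF) (contains_F T1) ?(contains_F T2).
Qed.

Definition zero_closed F (x : vec F) : Prop :=
  forall i j, 0 < i -> 0 < j -> i + j <= F ->
    kcoord F x i = 0%R -> kcoord F x j = 0%R -> kcoord F x (i + j) = 0%R.

Definition kunz_irr F (x : vec F) : Prop :=
  [/\ (forall j, 0 < j <= F -> kcoord F x j = 0%R \/ kcoord F x j = 1%R),
      kcoord F x F = 1%R, zero_closed F x &
      (forall i, 0 < i < F -> i.*2 != F -> kcoord F x i = 1%R ->
          kcoord F x (F - i) = 1%R -> False)].

Lemma kunz_vecE {S F} {x : vec F} : frobenius S F -> kunz_vec S F x ->
  forall j, 0 < j <= F -> kcoord F x j = Posz (~~ S j).
Proof.
move=> [_ Hfr] Hk j /ord_of [i ->]; rewrite kcoordE.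
have [k [-> [HS Hlt]]] := Hk i.
case: (boolP (S i.+1)) => Si /=.
  by case: k HS Hlt => // k _ /(_ 0 erefl); rewrite mul0n addn0 Si.
case: k HS Hlt => [|[|k]] HS Hlt //; first by move: HS; rewrite addn0 (negbTE Si).
by move: (Hlt 1 erefl); rewrite Hfr //; lia.
Qed.

(* Vertices are [kunz_irr]: the zero set of K(S, F+1) is S within 1..F. *)
Lemma vertex_kunz_irr F (x : vec F) : GK_vertex F x -> kunz_irr F x.
Proof.
move=> [S [[Irr Fr] Hk]]; have Hx := kunz_vecE Fr Hk.
have [[_ [Sadd _]] _] := Irr; have [NF _] := Fr.
have F0 := frobenius_pos Irr.1 Fr.
split.
- by move=> j Hj; rewrite Hx //; case: (S j); [left|right].
- by rewrite Hx ?NF //; lia.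
- move=> i j Hi Hj Hij; rewrite !Hx; try lia.
  by case Si: (S i) => //; case Sj: (S j) => // _ _; rewrite Sadd.
- move=> i Hi Hi2; rewrite !Hx; try lia.
  have := irreducible_symmetric Irr Fr i Hi Hi2.
  by case: (S i) => //; case: (S (F - i)) => // /(_ isT).
Qed.

(* The vector x is K(S, F+1) for S the zero set of x, a symmetric semigroup. *)
Lemma kunz_irr_vertex F (x : vec F) : kunz_irr F x -> GK_vertex F x.
Proof.
move=> [Hbin HF Hcl Hsym].
pose S n := kcoord F x n == 0%R.
have Sout : forall n, (n == 0) || (F < n) -> S n.
  by move=> n Hn; rewrite /S kcoord_out.
have NF : ~~ S F by rewrite /S HF.
have S1 : forall n, 0 < n <= F -> ~~ S n -> kcoord F x n = 1%R.
  by move=> n Hn; rewrite /S; case: (Hbin n Hn) => ->.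
have NS : numerical_semigroup S.
  split; first exact: Sout.
  split; last first.
    exists (iota 0 F.+1) => n Sn; rewrite mem_iota.
    by case: ltnP Sn (Sout n) => //; lia.
  move=> a b Sa Sb; case: (posnP a) => [->//|a0]; case: (posnP b) => [->|b0].
    by rewrite addn0.
  case: (ltnP F (a + b)) => Hab; first by apply: Sout; rewrite Hab orbT.
  by apply/eqP; apply: Hcl => //; apply/eqP.
have Fr : frobenius S F.
  by split => // n Hn; apply: Sout; rewrite Hn orbT.
exists S; split.
  split => //; apply: (symmetric_irreducible S F) => // i Hi Hi2 Si.
  apply/negP => Sfi; apply: (Hsym i Hi Hi2); apply: S1 => //; lia.
move=> i; have Hi : 0 < i.+1 <= F by rewrite ltn_ord.
case: (Hbin _ Hi); rewrite kcoordE => Hxi.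
  exists 0; split; first by rewrite Hxi.
  by split => //; rewrite addn0 /S kcoordE Hxi.
exists 1; split; first by rewrite Hxi.
split; first by apply: Sout; rewrite mul1n; apply/orP; right; lia.
by case=> // _; rewrite addn0 /S kcoordE Hxi.
Qed.

(* x_i = 0 forces x_(F-i) = 1, since F is not a sum of two zeros. *)
Lemma kunz_irr_pair {F} {x : vec F} {i} : kunz_irr F x -> 0 < i < F ->
  kcoord F x i = 0%R -> kcoord F x (F - i) = 1%R.
Proof.
move=> [Hbin HF Hcl _] Hi Hxi; case: (Hbin (F - i)) => [|H0|//]; first lia.
by move: (Hcl i (F - i)); rewrite subnKC ?HF ?Hxi ?H0 //; lia.
Qed.

(* x_i = 1 when 2i = F, since otherwise x_F = x_(i+i) = 0. *)
Lemma kunz_irr_half {F} {x : vec F} {i} : kunz_irr F x -> 0 < i -> i.*2 = F ->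
  kcoord F x i = 1%R.
Proof.
move=> [Hbin HF Hcl _] Hi Hi2; case: (Hbin i) => [|H0|//]; first lia.
by move: (Hcl i i); rewrite addnn Hi2 HF H0 //; lia.
Qed.

Lemma kunz_irr_below_mx {F} {x : vec F} {i} : kunz_irr F x -> 0 < i < mx F x ->
  kcoord F x i = 1%R.
Proof.
move=> [Hbin _ _ _] Hi; have [Hm _ Hmin] := mx_spec F x.
by case: (Hbin i) => [|/(Hmin i Hi)|]; first lia.
Qed.

Section Swap.
Context {F : nat} {x : vec F} {a : nat}.
Hypotheses (Kx : kunz_irr F x) (Ha : 0 < a < F) (Ha2 : a.*2 != F)
  (Hxa : kcoord F x a = 0%R).

Let Hxb : kcoord F x (F - a) = 1%R. Proof. exact: kunz_irr_pair. Qed.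

Lemma swapE j : 0 < j <= F -> kcoord F (shiftv F x a) j =
  if j == a then 1%R else if j == F - a then 0%R else kcoord F x j.
Proof. by apply: shift_swapE; rewrite ?subnKC //; lia. Qed.

Lemma swap_zero j : 0 < j <= F -> kcoord F (shiftv F x a) j = 0%R <->
  j = F - a \/ j <> a /\ kcoord F x j = 0%R.
Proof.
move=> Hj; rewrite swapE //; case: (eqVneq j a) => [->|ja].
  by split => [|[]]; lia.
by case: (eqVneq j (F - a)) => [->|jb]; split => [|[|[]]]; try lia; right.
Qed.

Lemma swap_kunz_irr : zero_closed F (shiftv F x a) -> kunz_irr F (shiftv F x a).
Proof.
have [Hbin HF _ Hsym] := Kx; move=> Hcl; split => //.
- move=> j Hj; rewrite swapE //.
  by case: eqP => _; [right | case: eqP => _; [left | exact: Hbin]].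
- by rewrite swapE ?ifN //; apply/eqP; lia.
move=> i Hi Hi2; rewrite !swapE; try lia.
have -> : (F - i == a) = (i == F - a) by apply/eqP/eqP; lia.
have -> : (F - i == F - a) = (i == a) by apply/eqP/eqP; lia.
case: (eqVneq i a) => [ia|_]; case: (eqVneq i (F - a)) => [ib|_] //=; try lia.
exact: Hsym.
Qed.

End Swap.

(* Closure of the zero set after moving at a = m_x with 2 m_x < F: the new zero
   F - m_x is too large to be a summand, and all other zeros exceed m_x. *)
Lemma up_closed {F} {x : vec F} : kunz_irr F x -> (mx F x).*2 < F ->
  zero_closed F (shiftv F x (mx F x)).
Proof.
move=> Kx Hm2; have [Hm' Hm2' Hxm] := mx_below_half Hm2; have [_ _ Hcl _] := Kx.
have Z := swap_zero Kx Hm' Hm2' Hxm.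
move=> i j Hi Hj Hij Hyi Hyj; apply/Z; first lia.
have [Ei|[im xi]] := (Z i ltac:(lia)).1 Hyi;
  have [Ej|[jm xj]] := (Z j ltac:(lia)).1 Hyj; try lia.
- by have := mx_le Hj xj; lia.
- by have := mx_le Hi xi; lia.
- by have := mx_le Hi xi; right; split; [lia | apply: Hcl].
Qed.

(* Closure of the zero set after moving at an index n > F/2 satisfying the
   child conditions; the new zero m = F - n is the delicate summand. *)
Lemma down_closed {F} {x : vec F} {n} : kunz_irr F x -> F < n.*2 -> n < F ->
  kcoord F x n = 0%R ->
  (forall k j, 0 < k -> 0 < j -> k + j = n ->
      (1 <= kcoord F x k + kcoord F x j)%R) ->
  kcoord F x (n.*2 - F) = 1%R -> 3 * n <> 2 * F -> 4 * n <> 3 * F ->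
  zero_closed F (shiftv F x n).
Proof.
move=> Kx Hn2 HnF Hxn Hsum Hd H3 H4; have [Hbin _ Hcl Hsym] := Kx.
have Hn' : 0 < n < F by lia.
have Hn2' : n.*2 != F by lia.
have Z := swap_zero Kx Hn' Hn2' Hxn.
set m := F - n in Z *.
have shift_zero : forall j, 0 < j -> m + j <= F -> j != n ->
    kcoord F x j = 0%R -> m + j <> n /\ kcoord F x (m + j) = 0%R.
  move=> j Hj Hmj Hjn Hxj; have Hjn' : j < n by lia.
  have Hxnj : kcoord F x (n - j) = 1%R.
    by have := Hsum j (n - j) Hj ltac:(lia) ltac:(lia); case: (Hbin (n - j)); lia.
  split; first by move=> E; move: Hd; rewrite (_ : n.*2 - F = j) ?Hxj; lia.
  case: (eqVneq (m + j).*2 F) => Hmj2.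
    have := Hcl j j Hj Hj ltac:(lia) Hxj Hxj.
    by rewrite (_ : j + j = n.*2 - F) ?Hd; lia.
  case: (Hbin (m + j)) => [|//|Hx1]; first lia; exfalso.
  apply: (Hsym (m + j) _ Hmj2 Hx1); first lia.
  by rewrite (_ : F - (m + j) = n - j) //; lia.
have Hx2m : kcoord F x (m + m) = 0%R.
  case: (Hbin (m + m)) => [|//|Hx1]; first lia; exfalso.
  apply: (Hsym (m + m) _ _ Hx1); [lia | apply/eqP; lia |].
  by rewrite (_ : F - (m + m) = n.*2 - F); lia.
move=> i j Hi Hj Hij Hyi Hyj; apply/Z; first lia; right.
have [Ei|[ni xi]] := (Z i ltac:(lia)).1 Hyi;
  have [Ej|[nj xj]] := (Z j ltac:(lia)).1 Hyj.
- by rewrite Ei Ej; split; [lia | ].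
- by rewrite Ei; apply: shift_zero => //; [lia | apply/eqP].
- by rewrite Ej addnC; apply: shift_zero => //; [lia | apply/eqP].
- split; last exact: Hcl.
  by move=> E; have := Hsum i j Hi Hj E; rewrite xi xj.
Qed.

Lemma edge_least {F} {x y : vec F} : GK_edge F x y ->
  [/\ kunz_irr F x, kunz_irr F y, (mx F x).*2 < F & y = shiftv F x (mx F x)].
Proof.
move=> [Vx [Vy [m [Hm Hxm Hmin Hm2 Ey]]]].
by rewrite (mx_eq Hm Hxm Hmin); split => //; apply: vertex_kunz_irr.
Qed.

Lemma edge_functional F (x y z : vec F) : GK_edge F x y -> GK_edge F x z -> y = z.
Proof. by move=> /edge_least [_ _ _ ->] /edge_least [_ _ _ ->]. Qed.

(* m_x strictly increases along edges: all coordinates up to m_x become 1. *)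
Lemma edge_mx_increasing {F} {x y : vec F} : GK_edge F x y -> mx F x < mx F y.
Proof.
move=> /edge_least [Kx _ Hm2 ->]; have [Hm' Hm2' Hxm] := mx_below_half Hm2.
have E := swapE Kx Hm' Hm2' Hxm.
apply: mx_gt => [|i Hi]; first lia.
rewrite E; last lia.
case: eqP => // im; rewrite ifN; last by apply/eqP; lia.
by rewrite kunz_irr_below_mx //; lia.
Qed.

Lemma parent_edge {F} {x : vec F} : kunz_irr F x -> (mx F x).*2 < F ->
  GK_edge F x (shiftv F x (mx F x)).
Proof.
move=> Kx Hm2; have [Hm' Hm2' Hxm] := mx_below_half Hm2.
have [_ _ Hmin] := mx_spec F x.
have Ky := swap_kunz_irr Kx Hm' Hm2' Hxm (up_closed Kx Hm2).
split; first exact: kunz_irr_vertex.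
split; first exact: kunz_irr_vertex.
by exists (mx F x); split => //; lia.
Qed.

Lemma xhatE F j : 0 < j <= F ->
  kcoord F (xhat F) j = Posz ((j.*2 <= F) || (j == F)).
Proof.
move=> /ord_of [i ->]; rewrite kcoordE /xhat ffunE /ceil_half -divn2.
by congr (Posz (_ || _)); apply/idP/idP; lia.
Qed.

(* x^ is a vertex: its zeros (F/2 < j < F) cannot be summed within 1..F. *)
Lemma xhat_kunz_irr F : 0 < F -> kunz_irr F (xhat F).
Proof.
move=> F0; split.
- by move=> j Hj; rewrite xhatE //; case: (_ || _); [right | left].
- by rewrite xhatE ?eqxx ?orbT //; lia.
- by move=> i j Hi Hj Hij; rewrite !xhatE; lia.
- by move=> i Hi Hi2; rewrite !xhatE; lia.
Qed.

(* x^ has no out-edge: its coordinates below F/2 are all 1. *)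
Lemma xhat_no_edge F (y : vec F) : ~ GK_edge F (xhat F) y.
Proof. by move=> [_ [_ [m [Hm]]]]; rewrite xhatE //; case: leqP => //=; lia. Qed.

(* A vertex without out-edge (2 m_x >= F) is the root: below F/2 all
   coordinates are 1, and above F/2 symmetry forces 0. *)
Lemma kunz_irr_root F (x : vec F) : kunz_irr F x -> F <= (mx F x).*2 ->
  x = xhat F.
Proof.
move=> Kx Hm2; have [Hbin HF _ Hsym] := Kx.
apply: vec_ext => j Hj; rewrite xhatE //.
case: (eqVneq j F) => [->|jF]; first by rewrite orbT HF.
rewrite orbF; case: leqP => Hj2.
  case: (eqVneq j.*2 F) => [Ej2|Ej2]; first by apply: kunz_irr_half => //; lia.
  by apply: kunz_irr_below_mx => //; lia.
case: (Hbin j Hj) => // Hx1; exfalso.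
apply: (Hsym j _ _ Hx1); [lia | apply/eqP; lia |].
by apply: kunz_irr_below_mx => //; lia.
Qed.

Lemma walk_unique {T : Type} {E : T -> T -> Prop} {r : T} :
  (forall u v w, E u v -> E u w -> v = w) -> (forall v, ~ E r v) ->
  forall v p q, walk T E v p r -> walk T E v q r -> p = q.
Proof.
move=> Efun Esink v p; elim: p v => [|w p IH] v [|w' q] //=.
- by move=> -> [/Esink].
- by move=> [Evw _] Ev; rewrite Ev in Evw; case: (Esink _ Evw).
- move=> [Evw W] [Evw' W']; have Ew := Efun _ _ _ Evw Evw'; subst w'.
  by rewrite (IH w q).
Qed.

Lemma walk_sorted {T : Type} {E : T -> T -> Prop} {f : T -> nat} {r : T} :
  (forall u v, E u v -> f u < f v) ->
  forall v p, walk T E v p r -> sorted ltn (map f (v :: p)).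
Proof.
move=> Emono v p; elim: p v => [|w p IH] v //= [Evw W].
by rewrite Emono //=; exact: IH.
Qed.

(* Every vertex reaches the root: follow parents, m_x grows up to F. *)
Lemma walk_to_root {F} {v : vec F} : kunz_irr F v ->
  exists p, walk _ (GK_edge F) v p (xhat F).
Proof.
move: {2}(F.+1 - mx F v) (leqnn (F.+1 - mx F v)) => k.
elim: k v => [|k IH] v Hk Kv; have [Hm _ _] := mx_spec F v.
all: case: (ltnP (mx F v).*2 F) => Hm2; last by exists [::]; exact: kunz_irr_root.
  by lia. (* k = 0 forces m_v = F + 1, so v has no parent *)
have Evw := parent_edge Kv Hm2.
have [_ Kw _ _] := edge_least Evw.
have Hkw : F.+1 - mx F (shiftv F v (mx F v)) <= k.
  have [Hw _ _] := mx_spec F (shiftv F v (mx F v)).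
  by have := edge_mx_increasing Evw; lia.
by have [p W] := IH _ Hkw Kw; exists (shiftv F v (mx F v) :: p).
Qed.

(* First part of the theorem: the unique walk to x^ has distinct vertices,
   since m_x strictly increases along it. *)
Lemma GK_tree F : 0 < F -> is_tree (vec F) (GK_vertex F) (GK_edge F) (xhat F).
Proof.
move=> F0; split; first exact/kunz_irr_vertex/xhat_kunz_irr.
move=> v /vertex_kunz_irr Kv _; have [p W] := walk_to_root Kv.
exists p; split.
  split => //; apply: zip_uniql; apply: (@map_uniq _ _ (mx F)).
  have Hs := walk_sorted (f := mx F) (@edge_mx_increasing F) _ _ W.
  exact: sorted_uniq ltn_trans ltnn _ Hs.
move=> q [Wq _].
exact: walk_unique (edge_functional F) (@xhat_no_edge F) _ _ _ W Wq.
Qed.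

(* Arithmetic of a vertex y with 2 m < F, m = m_y: since y_(F-m) = 1 and the
   zero set of y is closed, F - m is no sum of two zeros, y_(F-2m) = 1, and
   neither F - m = 2m nor F = 4m is possible. *)
Lemma parent_index_facts {F} {y : vec F} : kunz_irr F y -> (mx F y).*2 < F ->
  let m := mx F y in
  [/\ forall k j, 0 < k -> 0 < j -> k + j = F - m ->
        kcoord F y k = 1%R \/ kcoord F y j = 1%R,
      kcoord F y (F - m - m) = 1%R, F - m <> m + m & F <> 4 * m].
Proof.
move=> Ky Hm2 m; have [Hm' _ Hym0] := mx_below_half Hm2.
have [Hbin HF Hcl _] := Ky; have Hyn := kunz_irr_pair Ky Hm' Hym0.
have Hy2m : kcoord F y (m + m) = 0%R by apply: Hcl => //; lia.
split.
- move=> k j Hk Hj Hkj; case: (Hbin k) (Hbin j) => [|Hk0|]; [lia | | by left].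
  case=> [|Hj0|]; [lia | | by right].
  by move: (Hcl k j Hk Hj ltac:(lia) Hk0 Hj0); rewrite Hkj Hyn.
- case: (Hbin (F - m - m)) => [|Hy0|//]; first lia.
  move: (Hcl (F - m - m) m ltac:(lia) ltac:(lia) ltac:(lia) Hy0 Hym0).
  by rewrite subnK ?Hyn //; lia.
- by move=> E; move: Hyn; rewrite E Hy2m.
- move=> E; move: (Hcl (m + m) (m + m)).
  by rewrite Hy2m (_ : m + m + (m + m) = F) ?HF; lia.
Qed.

(* The children of x: every in-edge y -> x comes from the index n = F - m_y,
   which satisfies conditions (1)-(7) with respect to x. *)
Lemma edge_child_index F (x y : vec F) : GK_edge F y x ->
  exists n : nat,
    1 <= n <= F /\
        kcoord F x n = 0%R /\
        (forall k j, 0 < k -> 0 < j -> k + j = n ->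
            (1 <= kcoord F x k + kcoord F x j)%R) /\
        (F < n.*2 /\ n < F) /\
        kcoord F x (n.*2 - F) = 1%R /\
        3 * n <> 2 * F /\ 4 * n <> 3 * F /\
        (Posz F - Posz (mx F x) < Posz n)%R /\
        y = shiftv F x n.
Proof.
move=> /edge_least [Ky _ Hm2 Ex]; have [Hm' Hm2' Hym0] := mx_below_half Hm2.
set m := mx F y in Hm2 Ex Hm' Hm2' Hym0 *; have [Hbin _ _ _] := Ky.
have X := swapE Ky Hm' Hm2' Hym0; rewrite -Ex in X.
have Xlow : forall j, 0 < j < F - m ->
    kcoord F x j = if j == m then 1%R else kcoord F y j.
  move=> j Hj; rewrite X; last lia.
  by case: (j == m) => //; rewrite ifN //; apply/eqP; lia.
have [y_sum Hy1 Hn2m H4m] := parent_index_facts Ky Hm2.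
exists (F - m); split; first lia.
split; first by rewrite X ?eqxx; [case: eqP => //; lia | lia].
split.
  move=> k j Hk Hj Hkj; have Hs := y_sum k j Hk Hj Hkj.
  have := Hbin k ltac:(lia); have := Hbin j ltac:(lia).
  by rewrite !Xlow; try lia; case: (k == m); case: (j == m); lia.
split; first lia.
split.
  rewrite (_ : (F - m).*2 - F = F - m - m); last lia.
  by rewrite Xlow; [rewrite ifN //; apply/eqP | ]; lia.
split; first lia.
split; first lia.
split.
  suff : m < mx F x by lia.
  apply: mx_gt => [|i Hi]; first lia.
  rewrite Xlow; last lia.
  by case: (eqVneq i m) => [//|im]; rewrite kunz_irr_below_mx //; lia.
by rewrite Ex shiftvK //; lia.
Qed.

(* Conversely every index n satisfying (1)-(7) yields a child x + e_n - e_(F-n):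
   it is a vertex, its least zero is F - n, and moving there gives back x. *)
Lemma child_index_edge F (x : vec F) n : kunz_irr F x ->
  1 <= n <= F -> kcoord F x n = 0%R ->
  (forall k j, 0 < k -> 0 < j -> k + j = n ->
      (1 <= kcoord F x k + kcoord F x j)%R) ->
  F < n.*2 -> n < F -> kcoord F x (n.*2 - F) = 1%R ->
  3 * n <> 2 * F -> 4 * n <> 3 * F -> (Posz F - Posz (mx F x) < Posz n)%R ->
  GK_edge F (shiftv F x n) x.
Proof.
move=> Kx Hn Hxn Hsum Hn2 HnF Hd H3 H4 Hmx.
have Hn' : 0 < n < F by lia.
have Hn2' : n.*2 != F by lia.
have Ky := swap_kunz_irr Kx Hn' Hn2' Hxn (down_closed Kx Hn2 HnF Hxn Hsum Hd H3 H4).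
have E := swapE Kx Hn' Hn2' Hxn.
split; first exact: kunz_irr_vertex.
split; first exact: kunz_irr_vertex.
exists (F - n); split; [lia | | | lia | by rewrite shiftvK //; lia].
- by rewrite E ?eqxx; [case: eqP => //; lia | lia].
- move=> i Hi; rewrite E; last lia.
  rewrite !ifN; try (apply/eqP; lia).
  by rewrite kunz_irr_below_mx //; lia.
Qed.

Theorem theorem15 (F : nat) (HF : 0 < F) :
  is_tree (vec F) (GK_vertex F) (GK_edge F) (xhat F) /\
  forall (S : nat -> bool) (x : vec F), in_IF F S -> kunz_vec S F x ->
    forall y : vec F, GK_edge F y x <->
      exists n : nat,
        1 <= n <= F /\
            kcoord F x n = 0%R /\
            (forall k j, 0 < k -> 0 < j -> k + j = n ->
                (1 <= kcoord F x k + kcoord F x j)%R) /\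
            (F < n.*2 /\ n < F) /\
            kcoord F x (n.*2 - F) = 1%R /\
            3 * n <> 2 * F /\ 4 * n <> 3 * F /\
            (Posz F - Posz (mx F x) < Posz n)%R /\
            y = shiftv F x n.
Proof.
split; first exact: GK_tree.
move=> S x HS Hk y; have Kx : kunz_irr F x by apply: vertex_kunz_irr; exists S.
split; first exact: edge_child_index.
move=> [n [Hn [Hxn [Hsum [[Hn2 HnF] [Hd [H3 [H4 [Hmx ->]]]]]]]]].
exact: child_index_edge.
Qed.
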